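(* Let $(V,\le,\preccurlyeq)$ be a mixed lattice vector space. Then for all $x,y\in V$, $$ s(x^u-y^u)\le s(x-y). $$
   Context: A mixed lattice vector space $(V,\le,\preccurlyeq)$ is a real vector space $V$ with two partial orderings $\le$ (the initial order) and $\preccurlyeq$ (the specific order), each making $V$ a partially ordered vector space (i.e. $u\le v$ implies $u+w\le v+w$ and $au\le av$ for all $w\in V$, $a\ge 0$; likewise for $\preccurlyeq$), with positive cones $V_p=\{x:0\le x\}$ and $V_{sp}=\{x:0\preccurlyeq x\}$, such that: (1) for all $x,y\in V$ the mixed upper envelope $x\curlyvee y=\min\{w\in V: w\succcurlyeq x \text{ and } w\ge y\}$ and the mixed lower envelope $x\curlywedge y=\max\{w\in V: w\preccurlyeq x \text{ and } w\le y\}$ exist, where the minimum and maximum are taken with respect to $\le$; (2) $x\preccurlyeq y$ implies $x\le y$; (3) $x\curlyvee y$ and $x\curlywedge y$ belong to $V_{sp}$ whenever $x,y\in V_{sp}$. Notation: $x^u=0\curlyvee x$, $x^l=0\curlyvee(-x)$, ${}^ux=x\curlyvee 0$, ${}^lx=(-x)\curlyvee 0$, and the symmetric generalized absolute value $s(x)=x^u+x^l$ (which also equals ${}^ux+{}^lx$). *)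

From HB Require Import structures.
From mathcomp Require Import all_boot all_order all_algebra.
From mathcomp Require Import reals.
Set Implicit Arguments. Unset Strict Implicit. Unset Printing Implicit Defensive.
Import Order.TTheory GRing.Theory Num.Theory.
Local Open Scope ring_scope.

Definition povs_order (R : realType) (V : lmodType R) (ord : V -> V -> Prop) :=
  [/\ (forall x, ord x x),
      (forall x y, ord x y -> ord y x -> x = y),
      (forall x y z, ord x y -> ord y z -> ord x z),
      (forall u v w, ord u v -> ord (u + w) (v + w)) &
      (forall (a : R) u v, 0 <= a -> ord u v -> ord (a *: u) (a *: v))].

Definition is_mixed_upper (R : realType) (V : lmodType R)
    (le sle : V -> V -> Prop) (x y m : V) :=
  (sle x m /\ le y m) /\ (forall w, sle x w -> le y w -> le m w).

Definition is_mixed_lower (R : realType) (V : lmodType R)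
    (le sle : V -> V -> Prop) (x y m : V) :=
  (sle m x /\ le m y) /\ (forall w, sle w x -> le w y -> le w m).

(* (V, le, sle) is a mixed lattice vector space, and cup / cap are the
   (necessarily unique, by antisymmetry of le) mixed upper / lower envelopes. *)
Definition mixed_lattice_vs (R : realType) (V : lmodType R)
    (le sle : V -> V -> Prop) (cup cap : V -> V -> V) :=
  [/\ povs_order le /\ povs_order sle,
      (forall x y, is_mixed_upper le sle x y (cup x y)),
      (forall x y, is_mixed_lower le sle x y (cap x y)),
      (forall x y, sle x y -> le x y) &
      (forall x y, sle 0 x -> sle 0 y -> sle 0 (cup x y) /\ sle 0 (cap x y))].

Definition upart (R : realType) (V : lmodType R) (cup : V -> V -> V) (x : V) :=
  cup 0 x.
Definition lpart (R : realType) (V : lmodType R) (cup : V -> V -> V) (x : V) :=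
  cup 0 (- x).
Definition sabs (R : realType) (V : lmodType R) (cup : V -> V -> V) (x : V) :=
  upart cup x + lpart cup x.

From HB Require Import structures.
From mathcomp Require Import all_boot all_order all_algebra.
From mathcomp Require Import reals.
Set Implicit Arguments.
Unset Strict Implicit.
Unset Printing Implicit Defensive.

Import Order.TTheory GRing.Theory Num.Theory.
Local Open Scope ring_scope.

(* Since (x - y)^u + y^u is specifically positive and dominates x, minimality
   of x^u gives x^u - y^u <= (x - y)^u; as the right-hand side is specifically
   positive, minimality once more yields (x^u - y^u)^u <= (x - y)^u.  The same
   inequality with x and y swapped bounds the lower parts, since
   z^l = (-z)^u, and adding the two gives the claim. *)

Section PartiallyOrderedVectorSpace.
Variables (R : realType) (V : lmodType R) (ord : V -> V -> Prop).
Hypothesis ord_povs : povs_order ord.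

Lemma povs_leD a b c d : ord a c -> ord b d -> ord (a + b) (c + d).
Proof.
case: ord_povs => _ _ ord_trans ord_addr _ ac bd.
apply: (ord_trans _ (c + b)); first exact: ord_addr.
by rewrite (addrC c b) (addrC c d); apply: ord_addr.
Qed.

Lemma povs_addr_ge0 a b : ord 0 a -> ord 0 b -> ord 0 (a + b).
Proof. by move=> a_ge0 b_ge0; rewrite -(addr0 0); apply: povs_leD. Qed.

Lemma povs_lerBlDr a b c : ord a (b + c) -> ord (a - c) b.
Proof.
case: ord_povs => _ _ _ ord_addr _ /(ord_addr _ _ (- c)).
by rewrite addrK.
Qed.

End PartiallyOrderedVectorSpace.

Section UpperPart.
Variables (R : realType) (V : lmodType R) (le sle : V -> V -> Prop).
Variable cup : V -> V -> V.
Hypotheses (le_povs : povs_order le) (sle_povs : povs_order sle).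
Hypothesis cup_upper : forall x y, is_mixed_upper le sle x y (cup x y).

Lemma upart_sge0 x : sle 0 (upart cup x).
Proof. by case: (cup_upper 0 x) => -[]. Qed.

Lemma upart_ge x : le x (upart cup x).
Proof. by case: (cup_upper 0 x) => -[]. Qed.

Lemma upart_le_sge0 x w : sle 0 w -> le x w -> le (upart cup x) w.
Proof. by case: (cup_upper 0 x) => _; apply. Qed.

Lemma upartD_le x y : le (upart cup (x + y)) (upart cup x + upart cup y).
Proof.
apply: upart_le_sge0; first exact: povs_addr_ge0 (upart_sge0 x) (upart_sge0 y).
exact: povs_leD (upart_ge x) (upart_ge y).
Qed.

Lemma upartB_upart_le x y :
  le (upart cup (upart cup x - upart cup y)) (upart cup (x - y)).
Proof.
apply: upart_le_sge0; first exact: upart_sge0.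
by apply: povs_lerBlDr => //; rewrite -{1}(subrK y x); apply: upartD_le.
Qed.

End UpperPart.

Theorem lemma2p8 (R : realType) (V : lmodType R)
    (le sle : V -> V -> Prop) (cup cap : V -> V -> V) :
  mixed_lattice_vs le sle cup cap ->
  forall x y : V,
    le (sabs cup (upart cup x - upart cup y)) (sabs cup (x - y)).
Proof.
case=> [[le_povs sle_povs] cup_upper _ _ _] x y.
rewrite /sabs /lpart !opprB.
exact: (povs_leD le_povs) (upartB_upart_le le_povs sle_povs cup_upper x y)
                (upartB_upart_le le_povs sle_povs cup_upper y x).
Qed.
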